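(* In the setting below, suppose there is a reparametrization $\eta=\eta(\theta)$ of $\Theta$ (a twice differentiable map with twice differentiable inverse) such that for every $\theta\in\Theta$ and all $k,l$ the quantity $$\frac{\partial^2}{\partial\eta^k\partial\eta^l}f(m_\theta(a))$$ does not depend on $a\in A$. Then for all $\theta$, all $x\in{\cal F}_\theta$ and all $k,l$, $\sum_a[x(a)-m_\theta(a)]\frac{\partial^2}{\partial\theta^k\partial\theta^l}f(m_\theta(a))=0$; consequently the model belongs to a generalized exponential family, with Fisher information $I_{k,l}(\theta)=\sum_af'(m_\theta(a))\frac{\partial m_\theta(a)}{\partial\theta^k}\frac{\partial m_\theta(a)}{\partial\theta^l}$.
   Context: Setting: $A$ is a finite alphabet, ${\mathbb X}$ the set of probability distributions on $A$ with strictly positive entries, $\langle x|q\rangle=\sum_a x(a)q(a)$. $F:(0,1]\to{\mathbb R}$ is strictly convex and twice differentiable with $f=F'$. $\theta\in\Theta\mapsto m_\theta\in{\mathbb X}$ ($\Theta\subset{\mathbb R}^n$ open) is injective with $\theta\mapsto m_\theta(a)$ twice differentiable for each $a$. The Bregman divergence is $D(x\|\theta)=\sum_a[F(x(a))-F(m_\theta(a))-(x(a)-m_\theta(a))f(m_\theta(a))]$; it is assumed that for every $x\in{\mathbb X}$, $\theta\mapsto D(x\|\theta)$ has a unique minimizer $\theta(x)\in\Theta$, $\mu(x)=m_{\theta(x)}$, and ${\cal F}_\theta=\{x:\mu(x)=m_\theta\}$. The generalized Fisher information is $I_{k,l}(x)=\frac{\partial^2}{\partial\theta^k\partial\theta^l}D(x\|\theta)\big|_{m_\theta=\mu(x)}$,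 and the model belongs to a generalized exponential family if $I_{k,l}$ is constant on each fiber ${\cal F}_\theta$. *)

From mathcomp Require Import all_boot.
From Stdlib Require Import Reals.
Set Implicit Arguments. Unset Strict Implicit.
Open Scope R_scope.

Definition sumR {X : Type} (l : list X) (g : X -> R) : R :=
  foldr (fun x acc => g x + acc) 0 l.

Definition vec (n : nat) := 'I_n -> R.
Definition vadd {n} (u v : vec n) : vec n := fun j => u j + v j.
Definition vnorm {n} (h : vec n) : R := sumR (enum 'I_n) (fun j => Rabs (h j)).
Definition vdot {n} (u v : vec n) : R := sumR (enum 'I_n) (fun j => u j * v j).
Definition upd {n} (th : vec n) (k : 'I_n) (t : R) : vec n :=
  fun j => th j + (if j == k then t else 0).

Definition is_open {n} (U : vec n -> Prop) : Prop :=
  forall th, U th -> exists r, 0 < r /\ forall h : vec n, vnorm h < r -> U (vadd th h).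

Definition frechet_at {n} (g : vec n -> R) (th d : vec n) : Prop :=
  forall eps, 0 < eps -> exists delta, 0 < delta /\
    forall h : vec n, vnorm h < delta ->
      Rabs (g (vadd th h) - g th - vdot d h) <= eps * vnorm h.

Definition diff_on {n} (U : vec n -> Prop) (g : vec n -> R) : Prop :=
  exists dg : vec n -> vec n, forall th, U th -> frechet_at g th (dg th).

Definition twice_diff_on {n} (U : vec n -> Prop) (g : vec n -> R) : Prop :=
  exists dg : vec n -> vec n,
    (forall th, U th -> frechet_at g th (dg th)) /\
    (forall k, diff_on U (fun th => dg th k)).

Definition is_partial {n} (g : vec n -> R) (th : vec n) (k : 'I_n) (v : R) : Prop :=
  derivable_pt_lim (fun t => g (upd th k t)) 0 v.

Definition is_partial2 {n} (U : vec n -> Prop) (g : vec n -> R) (th : vec n)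
    (k l : 'I_n) (v : R) : Prop :=
  exists h : vec n -> R,
    (forall th', U th' -> is_partial g th' l (h th')) /\ is_partial h th k v.

Definition inX {A : finType} (x : A -> R) : Prop :=
  (forall a, 0 < x a) /\ sumR (enum A) x = 1.

Definition strictly_convex_on01 (F : R -> R) : Prop :=
  forall y z t, 0 < y <= 1 -> 0 < z <= 1 -> y <> z -> 0 < t < 1 ->
    F (t * y + (1 - t) * z) < t * F y + (1 - t) * F z.

Definition bregD {A : finType} {n} (F f : R -> R) (m : vec n -> A -> R)
    (x : A -> R) (th : vec n) : R :=
  sumR (enum A) (fun a =>
    F (x a) - F (m th a) - (x a - m th a) * f (m th a)).

Definition is_argmin {n} (U : vec n -> Prop) (g : vec n -> R) (th : vec n) : Prop :=
  U th /\ forall th', U th' -> g th <= g th'.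

(* fiber F_th = { x in X | mu(x) = m_th }, mu(x) = m_{theta(x)} with theta(x) the minimizer *)
Definition in_fiber {A : finType} {n} (U : vec n -> Prop) (F f : R -> R)
    (m : vec n -> A -> R) (th : vec n) (x : A -> R) : Prop :=
  inX x /\ exists t, is_argmin U (bregD F f m x) t /\ m t = m th.

(* generalized Fisher information I_{kl}(x) equals v: second partial of
   th' |-> D(x||th') at the minimizer theta(x) *)
Definition fisher_is {A : finType} {n} (U : vec n -> Prop) (F f : R -> R)
    (m : vec n -> A -> R) (x : A -> R) (k l : 'I_n) (v : R) : Prop :=
  exists t, is_argmin U (bregD F f m x) t /\ is_partial2 U (bregD F f m x) t k l v.

Definition gen_exp_family {A : finType} {n} (U : vec n -> Prop) (F f : R -> R)
    (m : vec n -> A -> R) : Prop :=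
  forall th x y k l v w, U th -> in_fiber U F f m th x -> in_fiber U F f m th y ->
    fisher_is U F f m x k l v -> fisher_is U F f m y k l w -> v = w.

From mathcomp Require Import all_boot.
From Stdlib Require Import Reals Lra IndefiniteDescription FunctionalExtensionality.
Set Implicit Arguments.
Unset Strict Implicit.
Open Scope R_scope.

(* Fix [th] and a point [x] of the fiber [F_th].  By injectivity of
   [th |-> m_th], [th] itself minimizes [D(x||.)], so the gradient vanishes:
   [sum_a (x a - m_th a) d_j f(m_th a) = 0].  In the coordinates [u = eta th]
   the second-order chain rule writes the [a]-independent [eta]-Hessian of
   [f(m(a))] as [P^T H_a P] plus first-order terms, where [H_a] is the
   [th]-Hessian and [P] the Jacobian of the inverse [psi].  Averaging against
   [x - m_th], whose total mass is zero, kills the constant and the first-order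
   terms, leaving [P^T (sum_a (x a - m_th a) H_a) P = 0]; as [P] is invertible
   the weighted Hessian vanishes.  Differentiating the gradient of [D(x||.)]
   once more then yields the Hessian [sum_a f'(m_th a) d_k m_th(a) d_l m_th(a)],
   independent of [x] in the fiber. *)

Section FiniteSums.
Variable X : Type.
Implicit Types (l : seq X) (g h : X -> R).

Lemma sumR_cons x l g : sumR (x :: l) g = g x + sumR l g.
Proof. by []. Qed.

Lemma sumR_ext l g h : (forall x, g x = h x) -> sumR l g = sumR l h.
Proof. by move=> E; elim: l => [|x l IH] //; rewrite !sumR_cons E IH. Qed.

Lemma sumR_zero l g : (forall x, g x = 0) -> sumR l g = 0.
Proof. by move=> E; elim: l => [|x l IH] //; rewrite sumR_cons E IH Rplus_0_l. Qed.

Lemma sumR_plus l g h : sumR l (fun x => g x + h x) = sumR l g + sumR l h.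
Proof. elim: l => [|x l IH] /=; [ring | rewrite IH; ring]. Qed.

Lemma sumR_minus l g h : sumR l (fun x => g x - h x) = sumR l g - sumR l h.
Proof. elim: l => [|x l IH] /=; [ring | rewrite IH; ring]. Qed.

Lemma sumR_opp l g : sumR l (fun x => - g x) = - sumR l g.
Proof. elim: l => [|x l IH] /=; [ring | rewrite IH; ring]. Qed.

Lemma sumR_scal_l l c g : c * sumR l g = sumR l (fun x => c * g x).
Proof. elim: l => [|x l IH] /=; [ring | rewrite -IH; ring]. Qed.

Lemma sumR_scal_r l c g : sumR l g * c = sumR l (fun x => g x * c).
Proof. elim: l => [|x l IH] /=; [ring | rewrite -IH; ring]. Qed.

End FiniteSums.

Lemma sumR_swap (X Y : Type) (l1 : seq X) (l2 : seq Y) (g : X -> Y -> R) :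
  sumR l1 (fun x => sumR l2 (g x)) = sumR l2 (fun y => sumR l1 (fun x => g x y)).
Proof.
elim: l1 => [|x l IH]; first by rewrite (sumR_zero _ (fun _ => erefl)).
by rewrite sumR_cons IH -sumR_plus.
Qed.

Lemma sumR_ge_term (T : eqType) (l : seq T) (g : T -> R) a :
  (forall y, 0 <= g y) -> a \in l -> g a <= sumR l g.
Proof.
move=> g_ge0; have sum_ge0 : forall s, 0 <= sumR s g.
  by elim=> [|y s IH] /=; [lra | have := g_ge0 y; lra].
elim: l => [|x l IH] //; rewrite in_cons sumR_cons => /orP [/eqP ->|a_in].
- by have := sum_ge0 l; lra.
- by have := IH a_in; have := g_ge0 x; lra.
Qed.

Lemma sumR_eq0_in (T : eqType) (l : seq T) (g : T -> R) :
  (forall y, y \in l -> g y = 0) -> sumR l g = 0.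
Proof.
elim: l => [|x l IH] // g0; rewrite sumR_cons g0 ?mem_head // IH ?Rplus_0_l //.
by move=> y y_in; apply: g0; rewrite in_cons y_in orbT.
Qed.

Lemma sumR_delta (T : eqType) (l : seq T) k (g : T -> R) :
  uniq l -> k \in l -> sumR l (fun j => if j == k then g j else 0) = g k.
Proof.
elim: l => [|x l IH] // /andP [x_notin uniq_l].
rewrite in_cons sumR_cons => /orP [/eqP ->|k_in].
- rewrite eqxx sumR_eq0_in ?Rplus_0_r // => j j_in.
  by case: eqP j_in => // -> j_in; rewrite j_in in x_notin.
- have /negbTE -> : x != k by apply: contraNneq x_notin => ->.
  by rewrite IH // Rplus_0_l.
Qed.

(** Rules for one-variable derivatives, stated for beta-reduced functions so
    that they apply directly to goals of the form [derivable_pt_lim (fun t => ..)]. *)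

Lemma derive_val f x l1 l2 :
  l1 = l2 -> derivable_pt_lim f x l1 -> derivable_pt_lim f x l2.
Proof. by move=> ->. Qed.

Lemma derive_plus f g x l1 l2 : derivable_pt_lim f x l1 -> derivable_pt_lim g x l2 ->
  derivable_pt_lim (fun t => f t + g t) x (l1 + l2).
Proof. exact: derivable_pt_lim_plus. Qed.

Lemma derive_minus f g x l1 l2 : derivable_pt_lim f x l1 -> derivable_pt_lim g x l2 ->
  derivable_pt_lim (fun t => f t - g t) x (l1 - l2).
Proof. exact: derivable_pt_lim_minus. Qed.

Lemma derive_mult f g x l1 l2 : derivable_pt_lim f x l1 -> derivable_pt_lim g x l2 ->
  derivable_pt_lim (fun t => f t * g t) x (l1 * g x + f x * l2).
Proof. exact: derivable_pt_lim_mult. Qed.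

Lemma derive_opp f x l :
  derivable_pt_lim f x l -> derivable_pt_lim (fun t => - f t) x (- l).
Proof. exact: derivable_pt_lim_opp. Qed.

Lemma derive_comp f g x l1 l2 : derivable_pt_lim g x l1 ->
  derivable_pt_lim f (g x) l2 -> derivable_pt_lim (fun t => f (g t)) x (l2 * l1).
Proof. exact: derivable_pt_lim_comp. Qed.

Lemma derive_sum (X : Type) (l : seq X) (g : X -> R -> R) (dg : X -> R) x :
  (forall y, derivable_pt_lim (g y) x (dg y)) ->
  derivable_pt_lim (fun t => sumR l (fun y => g y t)) x (sumR l dg).
Proof.
move=> Dg; elim: l => [|y l IH]; first exact: derivable_pt_lim_const.
exact: derive_plus.
Qed.

Lemma Rabs_quotient_lt a h c eps :
  h <> 0 -> c < eps -> Rabs a <= c * Rabs h -> Rabs (a / h) < eps.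
Proof.
move=> h_neq0 c_lt bound; have abs_h := Rabs_pos_lt h h_neq0.
rewrite /Rdiv Rabs_mult Rabs_inv; apply: (Rmult_lt_reg_r (Rabs h)) => //.
rewrite Rmult_assoc Rinv_l; nra.
Qed.

(* The vector [t e_k]; note that [upd th k t] is [vadd th (ek k t)]. *)
Definition ek n (k : 'I_n) (t : R) : vec n := fun j => if j == k then t else 0.

Lemma upd0 n (th : vec n) k : upd th k 0 = th.
Proof. by apply: functional_extensionality => j; rewrite /upd; case: (j == k); ring. Qed.

Lemma vnorm_ek n (k : 'I_n) t : vnorm (ek k t) = Rabs t.
Proof.
rewrite /vnorm (sumR_ext _ (h := fun j => if j == k then Rabs t else 0)).
  by rewrite sumR_delta ?enum_uniq ?mem_enum.
by move=> j; rewrite /ek; case: (j == k); rewrite ?Rabs_R0.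
Qed.

Lemma vdot_ek n (d : vec n) k t : vdot d (ek k t) = d k * t.
Proof.
rewrite /vdot (sumR_ext _ (h := fun j => if j == k then d j * t else 0)).
  by rewrite sumR_delta ?enum_uniq ?mem_enum.
by move=> j; rewrite /ek; case: (j == k); ring.
Qed.

Lemma open_line n (U : vec n -> Prop) th k : is_open U -> U th ->
  exists d, 0 < d /\ forall t, -d < t < d -> U (upd th k t).
Proof.
move=> U_open /U_open [r [r_gt0 ball_r]]; exists r; split => // t t_lt.
by apply: (ball_r (ek k t)); rewrite vnorm_ek; apply: Rabs_def1; lra.
Qed.

Lemma frechet_partial n (g : vec n -> R) th d k :
  frechet_at g th d -> is_partial g th k (d k).
Proof.
move=> Fr eps eps_gt0; have [del [del_gt0 Fb]] := Fr (eps / 2) ltac:(lra).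
exists (mkposreal _ del_gt0) => h h_neq0 /= h_lt; rewrite upd0 Rplus_0_l.
have := Fb (ek k h); rewrite vnorm_ek vdot_ek => /(_ h_lt) bound.
have -> : (g (upd th k h) - g th) / h - d k = (g (vadd th (ek k h)) - g th - d k * h) / h.
  by rewrite /upd /vadd /ek; field.
by apply: (Rabs_quotient_lt (c := eps / 2)) => //; lra.
Qed.

Lemma partial_unique n (g : vec n -> R) th k v w :
  is_partial g th k v -> is_partial g th k w -> v = w.
Proof. exact: uniqueness_limite. Qed.

Definition lin_bounded (phi : R -> R) : Prop :=
  exists K d, 0 <= K /\ 0 < d /\ forall t, Rabs t < d -> Rabs (phi t) <= K * Rabs t.

Lemma derivable_lin_bounded phi c :
  derivable_pt_lim phi 0 c -> phi 0 = 0 -> lin_bounded phi.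
Proof.
move=> Dphi phi0; have [del Hdel] := Dphi 1 Rlt_0_1.
exists (Rabs c + 1), del; split; first by have := Rabs_pos c; lra.
split=> [|t t_lt]; first exact: cond_pos.
have [->|t_neq0] := Req_dec t 0; first by rewrite phi0 Rabs_R0; lra.
have := Hdel t t_neq0 t_lt; rewrite Rplus_0_l phi0 Rminus_0_r => quot.
have := Rabs_triang_inv (phi t / t) c.
rewrite /Rdiv Rabs_mult Rabs_inv => tri.
have abs_t := Rabs_pos_lt t t_neq0.
have -> : Rabs (phi t) = Rabs (phi t) * / Rabs t * Rabs t by field; lra.
apply: Rmult_le_compat_r; lra.
Qed.

Lemma sumR_lin_bounded (X : Type) (l : seq X) (phi : X -> R -> R) :
  (forall x, lin_bounded (phi x)) -> exists K d, 0 <= K /\ 0 < d /\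
    forall t, Rabs t < d -> sumR l (fun x => Rabs (phi x t)) <= K * Rabs t.
Proof.
move=> B; elim: l => [|x l [K [d [K_ge0 [d_gt0 IH]]]]].
  exists 0, 1; split; [lra | split; [lra |]] => t _ /=.
  by have := Rabs_pos t; nra.
have [K1 [d1 [K1_ge0 [d1_gt0 B1]]]] := B x.
exists (K1 + K), (Rmin d1 d); split; [lra | split; [exact: Rmin_pos |]] => t t_lt.
have := B1 t (Rlt_le_trans _ _ _ t_lt (Rmin_l _ _)).
have := IH t (Rlt_le_trans _ _ _ t_lt (Rmin_r _ _)).
by rewrite sumR_cons; lra.
Qed.

Section CurveChainRule.
Variables (n : nat) (g : vec n -> R) (p d c : vec n) (gam : R -> vec n).
Hypothesis g_frechet : frechet_at g p d.
Hypothesis gam_deriv : forall j, derivable_pt_lim (fun t => gam t j) 0 (c j).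
Hypothesis gam0 : gam 0 = p.

Let disp t : vec n := fun j => gam t j - p j.

Let vadd_disp t : vadd p (disp t) = gam t.
Proof. by apply: functional_extensionality => j; rewrite /vadd /disp; ring. Qed.

Lemma curve_remainder_deriv :
  derivable_pt_lim (fun t => g (gam t) - g p - vdot d (disp t)) 0 0.
Proof.
(* The displacement is [O(|t|)], and Frechet differentiability makes the
   remainder [o(|displacement|)]. *)
have [K [d1 [K_ge0 [d1_gt0 disp_bound]]]] := sumR_lin_bounded (enum 'I_n)
  (fun j => derivable_lin_bounded (derive_minus (gam_deriv j)
     (derivable_pt_lim_const (p j) 0)) ltac:(by cbv beta; rewrite gam0 Rminus_diag)).
have disp0 : vdot d (disp 0) = 0.
  by apply: sumR_zero => j; rewrite /disp gam0; ring.
move=> eps eps_gt0.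
have c_gt0 : 0 < eps / (2 * (K + 1)) by apply: Rdiv_lt_0_compat; lra.
have [d2 [d2_gt0 Fb]] := g_frechet c_gt0.
have del_gt0 : 0 < Rmin d1 (d2 / (K + 1)).
  by apply: Rmin_pos => //; apply: Rdiv_lt_0_compat; lra.
exists (mkposreal _ del_gt0) => h h_neq0 /= h_lt.
have h_lt1 : Rabs h < d1 by apply: Rlt_le_trans h_lt (Rmin_l _ _).
have h_lt2 : Rabs h < d2 / (K + 1) by apply: Rlt_le_trans h_lt (Rmin_r _ _).
have norm_h : vnorm (disp h) <= K * Rabs h := disp_bound h h_lt1.
have norm_small : vnorm (disp h) < d2.
  have : (K + 1) * (d2 / (K + 1)) = d2 by field; lra.
  have := Rabs_pos h; nra.
have := Fb _ norm_small; rewrite vadd_disp => rem_bound.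
rewrite Rplus_0_l gam0 disp0 !Rminus_diag !Rminus_0_r.
apply: (Rabs_quotient_lt (c := eps / (2 * (K + 1)) * K)) => //.
- have : eps / (2 * (K + 1)) * (2 * (K + 1)) = eps by field; lra.
  nra.
- rewrite Rmult_assoc; apply: Rle_trans rem_bound _.
  by apply: Rmult_le_compat_l norm_h; lra.
Qed.

Lemma curve_chain_rule :
  derivable_pt_lim (fun t => g (gam t)) 0 (vdot d c).
Proof.
apply: (derivable_pt_lim_ext (fun t => (g (gam t) - g p - vdot d (disp t)) +
   (g p + sumR (enum 'I_n) (fun j => d j * (gam t j - p j))))).
  by move=> t; rewrite /vdot /disp; ring.
apply: (derive_val (l1 := 0 + (0 + vdot d c))); first ring.
apply: derive_plus; first exact: curve_remainder_deriv.
apply: derive_plus; first exact: derivable_pt_lim_const.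
apply: derive_sum => j.
apply: (derive_val (l1 := 0 * (gam 0 j - p j) + d j * (c j - 0))); first ring.
apply: derive_mult; first exact: derivable_pt_lim_const.
exact: derive_minus (gam_deriv j) (derivable_pt_lim_const _ _).
Qed.

End CurveChainRule.

Lemma partial2_value n (U : vec n -> Prop) (g D : vec n -> R) th k l v w :
  is_open U -> U th -> (forall th', U th' -> is_partial g th' l (D th')) ->
  is_partial D th k w -> is_partial2 U g th k l v -> v = w.
Proof.
move=> U_open th_in D_partial Dk [h [h_partial hk]].
apply: (partial_unique hk); have [d [d_gt0 line_in]] := open_line k U_open th_in.
apply: (derivable_pt_lim_locally_ext (fun t => D (upd th k t)) _ 0 (-d) d);
  [lra | move=> t t_in | exact: Dk].
exact: partial_unique (D_partial _ (line_in t t_in)) (h_partial _ (line_in t t_in)).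
Qed.

Lemma partial2_unique n (U : vec n -> Prop) g th k l v w :
  is_open U -> U th -> is_partial2 U g th k l v -> is_partial2 U g th k l w -> v = w.
Proof.
move=> U_open th_in Hv [h [h_partial hk]].
exact: (partial2_value U_open th_in h_partial hk Hv).
Qed.

Lemma derivative_at_min phi l d :
  derivable_pt_lim phi 0 l -> 0 < d -> (forall t, -d < t < d -> phi 0 <= phi t) -> l = 0.
Proof.
move=> Dphi d_gt0 phi_min.
have := deriv_minimum phi (-d) d 0 (exist _ l Dphi) ltac:(lra) d_gt0.
by apply=> t t_gt t_lt; apply: phi_min; lra.
Qed.

Section BregmanGradient.
Variables (A : finType) (n : nat) (F f : R -> R) (m : vec n -> A -> R) (x : A -> R).
Hypothesis F_deriv : forall y, 0 < y <= 1 -> derivable_pt_lim F y (f y).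

(* The terms [F'(m) dm] cancel, so that
   [d_k D(x||th) = - sum_a (x a - m_th a) d_k f(m_th a)]. *)
Lemma breg_partial th k (dm dg : A -> R) :
  (forall a, 0 < m th a <= 1) ->
  (forall a, is_partial (fun t => m t a) th k (dm a)) ->
  (forall a, is_partial (fun t => f (m t a)) th k (dg a)) ->
  is_partial (bregD F f m x) th k (- sumR (enum A) (fun a => (x a - m th a) * dg a)).
Proof.
move=> m_range dm_partial dg_partial; rewrite /is_partial /bregD -sumR_opp.
apply: derive_sum => a.
apply: (derive_val (l1 := 0 - f (m (upd th k 0) a) * dm a -
   ((0 - dm a) * f (m (upd th k 0) a) + (x a - m (upd th k 0) a) * dg a))).
  by rewrite upd0; ring.
apply: derive_minus; first apply: derive_minus; first exact: derivable_pt_lim_const.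
- by apply: derive_comp (dm_partial a) _; rewrite upd0; apply: F_deriv.
- apply: derive_mult (dg_partial a).
  exact: derive_minus (derivable_pt_lim_const _ _) (dm_partial a).
Qed.

Lemma breg_stationary (U : vec n -> Prop) th k (dm dg : A -> R) :
  is_open U -> is_argmin U (bregD F f m x) th ->
  (forall a, 0 < m th a <= 1) ->
  (forall a, is_partial (fun t => m t a) th k (dm a)) ->
  (forall a, is_partial (fun t => f (m t a)) th k (dg a)) ->
  sumR (enum A) (fun a => (x a - m th a) * dg a) = 0.
Proof.
move=> U_open [th_in th_min] m_range dm_partial dg_partial.
have [d [d_gt0 line_in]] := open_line k U_open th_in.
have := derivative_at_min (breg_partial m_range dm_partial dg_partial) d_gt0.
rewrite upd0 => /(_ (fun t t_in => th_min _ (line_in t t_in))); lra.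
Qed.

End BregmanGradient.

Section Reparametrization.
Variables (n : nat) (Th H : vec n -> Prop) (psi : vec n -> vec n) (g : vec n -> R).
Variables (Dg : vec n -> vec n) (DDg : 'I_n -> vec n -> vec n).
Variables (Dpsi : 'I_n -> vec n -> vec n) (DDpsi : 'I_n -> 'I_n -> vec n -> vec n).
Hypothesis H_open : is_open H.
Hypothesis psi_in : forall u, H u -> Th (psi u).
Hypothesis Dg_frechet : forall th, Th th -> frechet_at g th (Dg th).
Hypothesis DDg_frechet : forall j th, Th th -> frechet_at (fun t => Dg t j) th (DDg j th).
Hypothesis Dpsi_frechet : forall j u, H u -> frechet_at (fun u => psi u j) u (Dpsi j u).
Hypothesis DDpsi_frechet :
  forall j i u, H u -> frechet_at (fun u => Dpsi j u i) u (DDpsi j i u).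

Lemma reparam_partial u i : H u ->
  is_partial (fun u => g (psi u)) u i (sumR (enum 'I_n) (fun j => Dg (psi u) j * Dpsi j u i)).
Proof.
move=> u_in; apply: (curve_chain_rule (Dg_frechet (psi_in u_in))); last by rewrite upd0.
by move=> j; apply: frechet_partial (Dpsi_frechet j u_in).
Qed.

Lemma reparam_partial2 u i' i c : H u ->
  is_partial2 H (fun u => g (psi u)) u i' i c ->
  c = sumR (enum 'I_n) (fun j => sumR (enum 'I_n) (fun j' => DDg j (psi u) j' * Dpsi j' u i')
        * Dpsi j u i + Dg (psi u) j * DDpsi j i u i').
Proof.
move=> u_in; apply: (partial2_value H_open u_in (fun u u_in => reparam_partial i u_in)).
apply: derive_sum => j.
apply: (derive_val (l1 := vdot (DDg j (psi u)) (fun j' => Dpsi j' u i') * Dpsi j (upd u i' 0) i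
   + Dg (psi (upd u i' 0)) j * DDpsi j i u i')); first by rewrite upd0.
apply: derive_mult; last exact: frechet_partial (DDpsi_frechet j i u_in).
apply: (curve_chain_rule (DDg_frechet j (psi_in u_in))); last by rewrite upd0.
by move=> j'; apply: frechet_partial (Dpsi_frechet j' u_in).
Qed.

End Reparametrization.

Lemma jacobian_left_inverse n (Th : vec n -> Prop) (eta psi : vec n -> vec n) th j k
    (Dpsi : vec n) (Deta : 'I_n -> R) :
  is_open Th -> Th th -> (forall t, Th t -> psi (eta t) = t) ->
  frechet_at (fun u => psi u j) (eta th) Dpsi ->
  (forall i, is_partial (fun t => eta t i) th k (Deta i)) ->
  sumR (enum 'I_n) (fun i => Dpsi i * Deta i) = if j == k then 1 else 0.
Proof.
move=> Th_open th_in psi_eta Dpsi_frechet Deta_partial.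
have chain : derivable_pt_lim (fun t => psi (eta (upd th k t)) j) 0 (vdot Dpsi Deta).
  by apply: curve_chain_rule Dpsi_frechet Deta_partial _; rewrite upd0.
apply: (uniqueness_limite _ _ _ _ chain).
have [d [d_gt0 line_in]] := open_line k Th_open th_in.
apply: (derivable_pt_lim_locally_ext (fun t => upd th k t j) _ 0 (-d) d);
  [lra | by move=> t t_in; rewrite psi_eta //; apply: line_in |].
rewrite /upd; case: (j == k).
- by apply: (derive_val (l1 := 0 + 1)); [ring | apply: derive_plus;
    [apply: derivable_pt_lim_const | apply: derivable_pt_lim_id]].
- by apply: (derive_val (l1 := 0 + 0)); [ring | apply: derive_plus;
    apply: derivable_pt_lim_const].
Qed.

Lemma congruence_cancel n (P E M : 'I_n -> 'I_n -> R) :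
  (forall j k, sumR (enum 'I_n) (fun i => P j i * E i k) = if j == k then 1 else 0) ->
  (forall i i', sumR (enum 'I_n) (fun j =>
      sumR (enum 'I_n) (fun j' => P j i * M j j' * P j' i')) = 0) ->
  forall k l, M k l = 0.
Proof.
move=> PE PMP k l; set s := enum 'I_n.
have delta : forall (h : 'I_n -> R) k, sumR s (fun j => if j == k then h j else 0) = h k.
  by move=> h k'; rewrite sumR_delta ?enum_uniq ?mem_enum.
(* [M = E^T (P^T M P) E] entrywise, with [P^T M P = 0]. *)
transitivity (sumR s (fun j => sumR s (fun j' =>
   sumR s (fun i => P j i * E i k) * M j j' * sumR s (fun i' => P j' i' * E i' l)))).
  symmetry; rewrite (sumR_ext _ (h := fun j => if j == k then M j l else 0)) ?delta // => j.
  rewrite (sumR_ext _ (h := fun j' => if j' == l then (if j == k then 1 else 0) * M j j' else 0)).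
    by rewrite delta; case: (j == k); ring.
  by move=> j'; rewrite !PE; case: (j' == l); ring.
transitivity (sumR s (fun i => sumR s (fun i' => E i k * E i' l *
   sumR s (fun j => sumR s (fun j' => P j i * M j j' * P j' i'))))); last first.
  by apply: sumR_zero => i; apply: sumR_zero => i'; rewrite PMP; ring.
transitivity (sumR s (fun j => sumR s (fun j' => sumR s (fun i => sumR s (fun i' =>
   P j i * E i k * M j j' * (P j' i' * E i' l)))))).
  apply: sumR_ext => j; apply: sumR_ext => j'; rewrite !sumR_scal_r.
  by apply: sumR_ext => i; rewrite sumR_scal_l; apply: sumR_ext => i'; ring.
transitivity (sumR s (fun j => sumR s (fun i => sumR s (fun i' => sumR s (fun j' =>
   P j i * E i k * M j j' * (P j' i' * E i' l)))))).
  by apply: sumR_ext => j; rewrite sumR_swap; apply: sumR_ext => i; rewrite sumR_swap.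
rewrite sumR_swap; apply: sumR_ext => i; rewrite sumR_swap; apply: sumR_ext => i'.
rewrite sumR_scal_l; apply: sumR_ext => j; rewrite sumR_scal_l.
by apply: sumR_ext => j'; ring.
Qed.

(* Averaging an [a]-independent quantity [c], expanded by the second-order
   chain rule, against weights [w] of total mass zero that are orthogonal to
   the first-order coefficients leaves only the congruence term:
   [p^T (sum_a w a H_a) q = 0]. *)
Lemma weighted_chain_expansion (A : finType) n (w : A -> R) c
    (Dg : A -> 'I_n -> R) (Hs : A -> 'I_n -> 'I_n -> R) (p q r : 'I_n -> R) :
  sumR (enum A) w = 0 ->
  (forall j, sumR (enum A) (fun a => w a * Dg a j) = 0) ->
  (forall a, c = sumR (enum 'I_n) (fun j =>
     sumR (enum 'I_n) (fun j' => Hs a j j' * q j') * p j + Dg a j * r j)) ->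
  sumR (enum 'I_n) (fun j => sumR (enum 'I_n) (fun j' =>
     p j * sumR (enum A) (fun a => w a * Hs a j j') * q j')) = 0.
Proof.
move=> w_sum w_perp c_expand.
have c_avg : sumR (enum A) (fun a => w a * c) = 0 by rewrite -sumR_scal_r w_sum; ring.
have first_order : sumR (enum 'I_n) (fun j =>
    sumR (enum A) (fun a => w a * Dg a j) * r j) = 0.
  by apply: sumR_zero => j; rewrite w_perp; ring.
suff expand : sumR (enum A) (fun a => w a * c) =
    sumR (enum 'I_n) (fun j => sumR (enum 'I_n) (fun j' =>
      p j * sumR (enum A) (fun a => w a * Hs a j j') * q j'))
    + sumR (enum 'I_n) (fun j => sumR (enum A) (fun a => w a * Dg a j) * r j).
  by lra.
rewrite (sumR_ext _ (h := fun a => sumR (enum 'I_n) (fun j => w a *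
   (sumR (enum 'I_n) (fun j' => Hs a j j' * q j') * p j + Dg a j * r j)))); last first.
  by move=> a; rewrite {1}(c_expand a) sumR_scal_l.
rewrite sumR_swap -sumR_plus; apply: sumR_ext => j.
rewrite (sumR_ext _ (h := fun a => sumR (enum 'I_n) (fun j' => p j * (w a * Hs a j j') * q j')
   + w a * Dg a j * r j)); last first.
  by move=> a; rewrite Rmult_plus_distr_l sumR_scal_r sumR_scal_l; f_equal;
    [apply: sumR_ext => j'|]; ring.
rewrite sumR_plus sumR_swap sumR_scal_r; f_equal.
by apply: sumR_ext => j'; rewrite sumR_scal_l sumR_scal_r.
Qed.

Lemma inX_range (A : finType) (x : A -> R) a : inX x -> 0 < x a <= 1.
Proof.
move=> [x_pos x_sum]; split; first exact: x_pos.
by rewrite -x_sum; apply: sumR_ge_term; [move=> y; apply: Rlt_le | apply: mem_enum].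
Qed.

Lemma twice_diff_choice (X : Type) n (U : vec n -> Prop) (g : X -> vec n -> R) :
  (forall x, twice_diff_on U (g x)) ->
  exists (D : X -> vec n -> vec n) (DD : X -> 'I_n -> vec n -> vec n),
   (forall x th, U th -> frechet_at (g x) th (D x th)) /\
   (forall x j th, U th -> frechet_at (fun t => D x t j) th (DD x j th)).
Proof.
move=> g_twice.
have : forall x, exists p : (vec n -> vec n) * ('I_n -> vec n -> vec n),
   (forall th, U th -> frechet_at (g x) th (p.1 th)) /\
   (forall j th, U th -> frechet_at (fun t => p.1 t j) th (p.2 j th)).
  move=> x; have [Dg [Dg_frechet Dg_diff]] := g_twice x.
  have [DDg DDg_frechet] := functional_choice _ Dg_diff.
  by exists (Dg, DDg).
move=> /functional_choice [p p_spec].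
by exists (fun x => (p x).1), (fun x => (p x).2); split=> x; case: (p_spec x).
Qed.

Section StatisticalModel.
Variables (A : finType) (n : nat) (Theta : vec n -> Prop) (m : vec n -> A -> R).
Variables (F f df : R -> R).
Hypothesis Theta_open : is_open Theta.
Hypothesis m_in_X : forall th, Theta th -> inX (m th).
Hypothesis m_inj : forall th th', Theta th -> Theta th' -> m th = m th' -> th = th'.
Hypothesis F_deriv : forall y, 0 < y <= 1 -> derivable_pt_lim F y (f y).
Hypothesis f_deriv : forall y, 0 < y <= 1 -> derivable_pt_lim f y (df y).

Variables (Dm Dg : A -> vec n -> vec n) (DDg : A -> 'I_n -> vec n -> vec n).
Hypothesis Dm_frechet : forall a th, Theta th -> frechet_at (fun t => m t a) th (Dm a th).
Hypothesis Dg_frechet : forall a th, Theta th -> frechet_at (fun t => f (m t a)) th (Dg a th).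
Hypothesis DDg_frechet :
  forall a j th, Theta th -> frechet_at (fun t => Dg a t j) th (DDg a j th).

Let m_range th a : Theta th -> 0 < m th a <= 1.
Proof. by move=> th_in; apply/inX_range/m_in_X. Qed.

(* By injectivity of [th |-> m_th], on the fiber of [th] the minimizer of
   [D(x||.)] is [th] itself. *)
Lemma fiber_argmin th x : Theta th -> in_fiber Theta F f m th x ->
  is_argmin Theta (bregD F f m x) th /\ inX x.
Proof.
move=> th_in [x_in [t [t_min m_t]]].
by rewrite -(m_inj (proj1 t_min) th_in m_t).
Qed.

Lemma fiber_stationary th x j : Theta th -> in_fiber Theta F f m th x ->
  sumR (enum A) (fun a => (x a - m th a) * Dg a th j) = 0.
Proof.
move=> th_in /(fiber_argmin th_in) [th_min _].
apply: (breg_stationary F_deriv (dm := fun a => Dm a th j) Theta_open th_min).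
- by move=> a; apply: m_range.
- by move=> a; apply: frechet_partial (Dm_frechet a th_in).
- by move=> a; apply: frechet_partial (Dg_frechet a th_in).
Qed.

Lemma breg_hessian th x k l : Theta th ->
  is_partial2 Theta (bregD F f m x) th k l
    (sumR (enum A) (fun a => Dm a th k * Dg a th l)
     - sumR (enum A) (fun a => (x a - m th a) * DDg a l th k)).
Proof.
move=> th_in; exists (fun t => - sumR (enum A) (fun a => (x a - m t a) * Dg a t l)).
split=> [th' th'_in|].
  apply: (@breg_partial _ _ _ _ _ x F_deriv th' l (fun a => Dm a th' l)) => a.
  - exact: m_range.
  - exact: frechet_partial (Dm_frechet a th'_in).
  - exact: frechet_partial (Dg_frechet a th'_in).
apply: (derive_val (l1 := - sumR (enum A) (fun a => (0 - Dm a th k) * Dg a (upd th k 0) l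
   + (x a - m (upd th k 0) a) * DDg a l th k))).
  by rewrite upd0 -sumR_opp -sumR_minus; apply: sumR_ext => a; ring.
apply/derive_opp/derive_sum => a; apply: derive_mult.
- apply: derive_minus; first exact: derivable_pt_lim_const.
  exact: frechet_partial (Dm_frechet a th_in).
- exact: frechet_partial (DDg_frechet a l th_in).
Qed.

Variables (H : vec n -> Prop) (eta psi : vec n -> vec n).
Variables (Deta Dpsi : 'I_n -> vec n -> vec n) (DDpsi : 'I_n -> 'I_n -> vec n -> vec n).
Hypothesis H_open : is_open H.
Hypothesis eta_in : forall th, Theta th -> H (eta th) /\ psi (eta th) = th.
Hypothesis psi_in : forall u, H u -> Theta (psi u) /\ eta (psi u) = u.
Hypothesis Deta_frechet : forall i th, Theta th -> frechet_at (fun t => eta t i) th (Deta i th).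
Hypothesis Dpsi_frechet : forall j u, H u -> frechet_at (fun u => psi u j) u (Dpsi j u).
Hypothesis DDpsi_frechet :
  forall j i u, H u -> frechet_at (fun u => Dpsi j u i) u (DDpsi j i u).
Hypothesis eta_hessian_const : forall th, Theta th -> forall k l, exists c, forall a,
  is_partial2 H (fun u => f (m (psi u) a)) (eta th) k l c.

Lemma fiber_weighted_hessian th x j j' : Theta th -> in_fiber Theta F f m th x ->
  sumR (enum A) (fun a => (x a - m th a) * DDg a j th j') = 0.
Proof.
move=> th_in fib; have [_ [_ x_sum]] := fiber_argmin th_in fib.
have [eta_th psi_eta] := eta_in th_in.
move: j j'; apply: (congruence_cancel (P := fun j i => Dpsi j (eta th) i)
  (E := fun i k => Deta i th k)) => [j k | i i'].
  apply: (jacobian_left_inverse Theta_open th_in _ (Dpsi_frechet j eta_th)).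
    by move=> t t_in; case: (eta_in t_in).
  by move=> i; apply: frechet_partial (Deta_frechet i th_in).
have [c c_spec] := eta_hessian_const th_in i' i.
apply: (weighted_chain_expansion (c := c) (Dg := fun a j => Dg a th j)
  (r := fun j => DDpsi j i (eta th) i')).
- by rewrite sumR_minus x_sum (proj2 (m_in_X th_in)); ring.
- by move=> j; apply: fiber_stationary.
- move=> a; have := reparam_partial2 H_open (fun u u_in => proj1 (psi_in u_in))
    (Dg_frechet a) (DDg_frechet a) Dpsi_frechet DDpsi_frechet eta_th (c_spec a).
  by rewrite psi_eta.
Qed.

Lemma fiber_breg_hessian th x k l : Theta th -> in_fiber Theta F f m th x ->
  is_partial2 Theta (bregD F f m x) th k l
    (sumR (enum A) (fun a => df (m th a) * Dm a th k * Dm a th l)).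
Proof.
move=> th_in fib.
have Dg_chain a : Dg a th l = df (m th a) * Dm a th l.
  apply: (partial_unique (frechet_partial l (Dg_frechet a th_in))).
  apply: derive_comp (frechet_partial l (Dm_frechet a th_in)) _.
  by rewrite upd0; apply/f_deriv/m_range.
rewrite (_ : sumR _ _ = sumR (enum A) (fun a => Dm a th k * Dg a th l)
     - sumR (enum A) (fun a => (x a - m th a) * DDg a l th k)); first exact: breg_hessian.
rewrite fiber_weighted_hessian // Rminus_0_r.
by apply: sumR_ext => a; rewrite Dg_chain; ring.
Qed.

Hypothesis argmin_unique : forall x, inX x -> exists! t, is_argmin Theta (bregD F f m x) t.

Lemma fiber_fisher th x k l v : Theta th -> in_fiber Theta F f m th x ->
  fisher_is Theta F f m x k l v ->
  v = sumR (enum A) (fun a => df (m th a) * Dm a th k * Dm a th l).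
Proof.
move=> th_in fib [t [t_min Hv]]; have [th_min x_in] := fiber_argmin th_in fib.
have [t0 [_ t0_unique]] := argmin_unique x_in.
have t_th : t = th by rewrite -(t0_unique _ t_min) -(t0_unique _ th_min).
rewrite t_th in Hv.
exact: partial2_unique Theta_open th_in Hv (fiber_breg_hessian _ _ th_in fib).
Qed.

End StatisticalModel.

Theorem mainTheorem7
  (A : finType) (n : nat)
  (Theta : vec n -> Prop) (m : vec n -> A -> R)
  (F f df : R -> R)
  (* setting *)
  (HThopen : is_open Theta)
  (HmX : forall th, Theta th -> inX (m th))
  (Hminj : forall th th', Theta th -> Theta th' -> m th = m th' -> th = th')
  (Hm2 : forall a, twice_diff_on Theta (fun th => m th a))
  (HFconv : strictly_convex_on01 F)
  (HFf : forall y, 0 < y <= 1 -> derivable_pt_lim F y (f y))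
  (Hfdf : forall y, 0 < y <= 1 -> derivable_pt_lim f y (df y))
  (Hmin : forall x, inX x -> exists! t, is_argmin Theta (bregD F f m x) t)
  (* the second derivatives of th |-> f(m_th(a)) used in the statement exist *)
  (Hfm2 : forall a, twice_diff_on Theta (fun th => f (m th a)))
  (* reparametrization eta with inverse psi, eta : Theta -> H *)
  (H : vec n -> Prop) (eta psi : vec n -> vec n)
  (HHopen : is_open H)
  (Heta_in : forall th, Theta th -> H (eta th) /\ psi (eta th) = th)
  (Hpsi_in : forall u, H u -> Theta (psi u) /\ eta (psi u) = u)
  (Heta2 : forall j, twice_diff_on Theta (fun th => eta th j))
  (Hpsi2 : forall j, twice_diff_on H (fun u => psi u j))
  (* d^2/deta^k deta^l f(m_th(a)) does not depend on a *)
  (Hconst : forall th, Theta th -> forall k l, exists c, forall a,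
      is_partial2 H (fun u => f (m (psi u) a)) (eta th) k l c) :
  (forall th x k l (v : A -> R), Theta th -> in_fiber Theta F f m th x ->
     (forall a, is_partial2 Theta (fun t => f (m t a)) th k l (v a)) ->
     sumR (enum A) (fun a => (x a - m th a) * v a) = 0)
  /\ gen_exp_family Theta F f m
  /\ (forall th x k l (dk dl : A -> R), Theta th -> in_fiber Theta F f m th x ->
     (forall a, is_partial (fun t => m t a) th k (dk a)) ->
     (forall a, is_partial (fun t => m t a) th l (dl a)) ->
     fisher_is Theta F f m x k l
       (sumR (enum A) (fun a => df (m th a) * dk a * dl a))).
Proof.
have [Dm [_ [Dm_frechet _]]] := twice_diff_choice Hm2.
have [Dg [DDg [Dg_frechet DDg_frechet]]] := twice_diff_choice Hfm2.
have [Deta [_ [Deta_frechet _]]] := twice_diff_choice Heta2.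
have [Dpsi [DDpsi [Dpsi_frechet DDpsi_frechet]]] := twice_diff_choice Hpsi2.
have orth := fiber_weighted_hessian HThopen HmX Hminj HFf Dm_frechet Dg_frechet DDg_frechet
  HHopen Heta_in Hpsi_in Deta_frechet Dpsi_frechet DDpsi_frechet Hconst.
have hessian := fiber_breg_hessian HThopen HmX Hminj HFf Hfdf Dm_frechet Dg_frechet
  DDg_frechet HHopen Heta_in Hpsi_in Deta_frechet Dpsi_frechet DDpsi_frechet Hconst.
have fisher := fiber_fisher HThopen HmX Hminj HFf Hfdf Dm_frechet Dg_frechet
  DDg_frechet HHopen Heta_in Hpsi_in Deta_frechet Dpsi_frechet DDpsi_frechet Hconst Hmin.
split; [|split].
-
  move=> th x k l v th_in fib v_hess.
  rewrite (sumR_ext _ (h := fun a => (x a - m th a) * DDg a l th k)); first exact: orth.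
  move=> a; congr (_ * _).
  exact: (partial2_value HThopen th_in
    (fun th' th'_in => frechet_partial l (Dg_frechet a th' th'_in))
    (frechet_partial k (DDg_frechet a l th th_in)) (v_hess a)).
- (* Both Fisher informations equal the same [x]-independent expression. *)
  move=> th x y k l v w th_in x_fib y_fib Hv Hw.
  by rewrite (fisher _ _ _ _ _ th_in x_fib Hv) (fisher _ _ _ _ _ th_in y_fib Hw).
- (* The Fisher information is attained at the minimizer [th]. *)
  move=> th x k l dk dl th_in fib dk_partial dl_partial.
  exists th; split; first exact: (proj1 (fiber_argmin Hminj th_in fib)).
  rewrite (sumR_ext _ (h := fun a => df (m th a) * Dm a th k * Dm a th l)); first exact: hessian.
  move=> a; rewrite (partial_unique (dk_partial a) (frechet_partial k (Dm_frechet a th th_in))).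
  by rewrite (partial_unique (dl_partial a) (frechet_partial l (Dm_frechet a th th_in))).
Qed.
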